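(* Let $G$ be a connected (finite, simple) graph, $\mathcal{F}$ a maximum induced forest of $G$, $S=V(G)\setminus V(\mathcal{F})$, $H$ the contracted graph, and $B$ a skeleton of $H$ with the maximum possible number of 2-edges among all skeletons (all as defined in the context). Let $L_S$ be the set of vertices of $S$ that are leaves of $B$. Then for every vertex in $L_S$, the unique edge of $B$ incident to it is a 2-edge.
   Context: A maximum induced forest of $G$ is an induced forest of $G$ with the maximum number of vertices. Let $\mathcal{T}$ be the set of connected components (trees) of $\mathcal{F}$ and $S=V(G)\setminus V(\mathcal{F})$. The graph $H$ has vertex set $\{x_T : T\in\mathcal{T}\}\cup S$ (the $x_T$ are called tree vertices, the vertices of $S$ non-tree vertices) and edge set consisting of all edges of $G[S]$ together with all pairs $ux_T$ with $u\in S$, $T\in\mathcal{T}$ such that $u$ has at least one neighbor in $V(T)$ in $G$. An edge $ux_T$ of $H$ is a 2-edge if $u$ has at least two neighbors in $V(T)$ in $G$; all other edges of $H$ (including all edges with both endpoints in $S$) are 1-edges. A skeleton is a spanning tree of $H$ rooted at some tree vertex, with all edges directed towards the root (an in-arborescence). A leaf of $B$ is a vertex of total degree 1 in $B$. *)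

From mathcomp Require Import all_boot.
Set Implicit Arguments. Unset Strict Implicit. Unset Printing Implicit Defensive.

(* A finite simple graph: vertex type V : finType, adjacency e : rel V,
   assumed symmetric and irreflexive in the theorem. *)

Definition is_cycle (T : eqType) (r : rel T) (s : seq T) : bool :=
  [&& uniq s, 3 <= size s & cycle r s].

Definition acyclic (T : eqType) (r : rel T) : Prop :=
  forall s : seq T, ~~ is_cycle r s.

(* vertices of H: inl T for a tree T, inr u for u in S = V \ F *)
Notation HV V := ({set V} + V)%type.

Section Contraction.
Variables (V : finType) (e : rel V).

Definition induced_adj (F : {set V}) : rel V :=
  fun x y => [&& x \in F, y \in F & e x y].

Definition induced_forest (F : {set V}) : Prop := acyclic (induced_adj F).

Definition max_induced_forest (F : {set V}) : Prop :=
  induced_forest F /\ forall F' : {set V}, induced_forest F' -> #|F'| <= #|F|.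

Definition trees (F : {set V}) : {set {set V}} :=
  [set [set y | connect (induced_adj F) x y] | x in F].


Definition Hvert (F : {set V}) : {set (HV V)} :=
  (inl @: trees F) :|: (inr @: ~: F).

Definition Hadj (F : {set V}) : rel (HV V) :=
  fun a b =>
    match a, b with
    | inr u, inr v => [&& u \in ~: F, v \in ~: F & e u v]
    | inr u, inl T | inl T, inr u =>
        [&& u \in ~: F, T \in trees F & [exists y in T, e u y]]
    | inl _, inl _ => false
    end.

Definition Hedges (F : {set V}) : {set {set (HV V)}} :=
  [set E : {set HV V} | [exists a, exists b, (E == [set a; b]) && Hadj F a b]].

Definition two_pair (a b : (HV V)) : bool :=
  match a, b with
  | inr u, inl T | inl T, inr u => 1 < #|[set y in T | e u y]|
  | _, _ => false
  end.

Definition is_2edge (E : {set (HV V)}) : bool :=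
  [exists a, exists b, (E == [set a; b]) && two_pair a b].

Definition eadj (EB : {set {set (HV V)}}) : rel (HV V) := fun a b => [set a; b] \in EB.

(* A skeleton: a spanning tree of H (edge set EB), rooted at a tree vertex r;
   edges are oriented towards r (the orientation is determined by r and EB). *)
Definition skeleton (F : {set V}) (r : (HV V)) (EB : {set {set (HV V)}}) : Prop :=
  [/\ r \in inl @: trees F,
      EB \subset Hedges F,
      {in Hvert F &, forall a b, connect (eadj EB) a b}
    & acyclic (eadj EB)].

Definition num_2edges (EB : {set {set (HV V)}}) : nat := #|[set E in EB | is_2edge E]|.

Definition degB (EB : {set {set (HV V)}}) (a : (HV V)) : nat := #|[set E in EB | a \in E]|.

End Contraction.

From mathcomp Require Import all_boot.
Set Implicit Arguments. Unset Strict Implicit. Unset Printing Implicit Defensive.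

(* Suppose the B-edge at a leaf u of S is a 1-edge.  Replacing it by any edge
   u x_T of H keeps B a skeleton (u just hangs from x_T instead), so by the
   maximality of B no such edge is a 2-edge: u has at most one neighbour in
   each tree of F.  Then a cycle of G[F + u] would have to leave and re-enter u
   inside a single tree, so F + u is a larger induced forest, a contradiction. *)

Lemma is_cycle_rot (T : eqType) (r : rel T) k (s : seq T) :
  is_cycle r (rot k s) = is_cycle r s.
Proof. by rewrite /is_cycle rot_uniq size_rot rot_cycle. Qed.

Lemma is_cycle_through (T : eqType) (r : rel T) (s : seq T) (x : T) :
  is_cycle r s -> x \in s ->
  exists n p t, [/\ r x n, r p x, path r n (rcons t p) & uniq (x :: n :: rcons t p)].
Proof.
move=> cs xs; case/splitPr: xs cs => p1 p2 cs.
have : is_cycle r (x :: p2 ++ p1) by rewrite -cat_cons -rot_size_cat is_cycle_rot.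
case: (p2 ++ p1) => [|n t]; first by case/and3P.
case/lastP: t => [|t p]; first by case/and3P.
case/and3P=> s_uniq _ /= /andP[xn]; rewrite rcons_path last_rcons => /andP[np px].
by exists n, p, t.
Qed.

Section ForestExtension.
Variables (V : finType) (e : rel V).
Hypothesis e_sym : symmetric e.

Lemma induced_adj_setU1 (F : {set V}) u :
  {in predC1 u &, subrel (induced_adj e (u |: F)) (induced_adj e F)}.
Proof.
by move=> x y /= xu yu; rewrite /induced_adj !in_setU1 (negbTE xu) (negbTE yu).
Qed.

Lemma induced_forest_setU1 (F : {set V}) u :
  induced_forest e F -> u \notin F ->
  (forall T, T \in trees e F -> #|[set y in T | e u y]| <= 1) ->
  induced_forest e (u |: F).
Proof.
move=> forestF uF nbrs1 s; apply/negP => cs.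
have [us | us] := boolP (u \in s); last first.
  move: cs => /and3P[s_uniq s_size s_cycle]; apply: (negP (forestF s)).
  rewrite /is_cycle s_uniq s_size (sub_in_cycle (@induced_adj_setU1 F u)) //.
  by apply/allP => y ys /=; apply: contraNneq us => <-.
have [n [p [t [un pu n_p uniq_s]]]] := is_cycle_through cs us.
have avoid_u : all (predC1 u) (n :: rcons t p).
  by apply/allP => y ys; apply/eqP => yu; move: uniq_s; rewrite /= -yu ys.
have nF : n \in F.
  by move: un avoid_u => /and3P[_]; rewrite in_setU1 /= => /predU1P[->|//]; rewrite eqxx.
have n_neq_p : n != p.
  by apply: contraTneq uniq_s => ->; rewrite /= mem_rcons mem_head !andbF.
have nbr_n : n \in [set y in [set y | connect (induced_adj e F) n y] | e u y].
  by rewrite !inE connect0; case/and3P: un.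
have nbr_p : p \in [set y in [set y | connect (induced_adj e F) n y] | e u y].
  rewrite !inE -e_sym; case/and3P: pu => _ _ ->; rewrite andbT.
  apply/connectP; exists (rcons t p); last by rewrite last_rcons.
  exact: (sub_in_path (@induced_adj_setU1 F u) avoid_u n_p).
suff : 1 < #|[set y in [set y | connect (induced_adj e F) n y] | e u y]|.
  by rewrite ltnNge nbrs1 // imset_f.
apply: leq_trans (subset_leq_card (_ : [set n; p] \subset _)).
  by rewrite cards2 n_neq_p.
by apply/subsetP => y /set2P[] ->.
Qed.

Lemma max_induced_forest_two_nbrs (F : {set V}) u :
  max_induced_forest e F -> u \notin F ->
  exists2 T, T \in trees e F & 1 < #|[set y in T | e u y]|.
Proof.
move=> [forestF maxF] uF.
have [/exists_inP[T TF T2] | /exists_inPn nbrs1] :=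
  boolP [exists T in trees e F, 1 < #|[set y in T | e u y]|]; first by exists T.
have forestFu : induced_forest e (u |: F).
  by apply: induced_forest_setU1 => // T /nbrs1; rewrite -leqNgt.
by have := maxF _ forestFu; rewrite cardsU1 uF ltnn.
Qed.

End ForestExtension.

Lemma eadj_sym (V : finType) (EB : {set {set HV V}}) : symmetric (eadj EB).
Proof. by move=> a b; rewrite /eadj setUC. Qed.

Section LeafSwap.
Variables (V : finType) (EB : {set {set HV V}}) (x w y : HV V).
Hypothesis leafB : forall E, E \in EB -> x \in E -> E = [set x; w].
Hypothesis y_neq_x : y != x.

Let EB' := [set x; y] |: (EB :\ [set x; w]).

Lemma swap_leaf_nbr z : eadj EB' x z -> z = y.
Proof.
rewrite /eadj in_setU1 in_setD1 => /orP[/eqP xz_xy | /andP[xz_xw /leafB]].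
  have : y \in [set x; z] by rewrite xz_xy set22.
  by rewrite !inE (negbTE y_neq_x) => /eqP.
by move=> /(_ (set21 _ _)) xz_xw'; rewrite xz_xw' eqxx in xz_xw.
Qed.

Lemma swap_leaf_acyclic : acyclic (eadj EB) -> acyclic (eadj EB').
Proof.
move=> acyclicB s; apply/negP => cs.
have [xs | xs] := boolP (x \in s); last first.
  move: cs => /and3P[s_uniq s_size s_cycle]; apply: (negP (acyclicB s)).
  rewrite /is_cycle s_uniq s_size (@sub_in_cycle _ (predC1 x) _ _ _ _ _ s_cycle) //.
    move=> a b /= ax bx; rewrite /eadj in_setU1 in_setD1 => /orP[/eqP ab_xy|/andP[//]].
    by have := set21 x y; rewrite -ab_xy !inE !(eq_sym x) (negbTE ax) (negbTE bx).
  by apply/allP => a ays /=; apply: contraNneq xs => <-.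
have [n [p [t [xn px _ uniq_s]]]] := is_cycle_through cs xs.
rewrite eadj_sym in px.
by move: uniq_s; rewrite /= (swap_leaf_nbr xn) (swap_leaf_nbr px) mem_rcons mem_head !andbF.
Qed.

(* Contracting the leaf edge onto [w] turns [EB]-walks into [EB']-walks. *)
Lemma swap_leaf_connect a b :
  a != x -> b != x -> connect (eadj EB) a b -> connect (eadj EB') a b.
Proof.
pose f z := if z == x then w else z.
have nbr_x z : eadj EB x z -> z \in [set x; w].
  by move=> xz; rewrite -(leafB xz (set21 x z)) set22.
have f_step z1 z2 : eadj EB z1 z2 -> connect (eadj EB') (f z1) (f z2).
  rewrite /f; have [-> | z1x] := eqVneq z1 x.
    by move=> /nbr_x /set2P[] ->; rewrite ?eqxx //; case: eqP.
  have [-> | z2x] := eqVneq z2 x.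
    by rewrite eadj_sym => /nbr_x /set2P[z1x'|->]; [rewrite z1x' eqxx in z1x|].
  move=> z12; apply: connect1; rewrite /eadj in_setU1 in_setD1 -/(eadj EB z1 z2) z12 andbT.
  suff x_notin : x \notin [set z1; z2].
    by apply/orP; right; apply: contraNneq x_notin => ->; rewrite set21.
  by rewrite !inE !(eq_sym x) (negbTE z1x) (negbTE z2x).
move=> ax bx /connectP[p p_path b_last]; subst b.
suff : connect (eadj EB') (f a) (f (last a p)) by rewrite /f (negbTE ax) (negbTE bx).
elim: p a {ax bx} p_path => [|z p IHp] a /=; first by rewrite connect0.
by case/andP=> az /IHp; apply: connect_trans (f_step _ _ az).
Qed.

Lemma swap_leaf_connected (W : {set HV V}) :
  y \in W -> {in W &, forall a b, connect (eadj EB) a b} ->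
  {in W &, forall a b, connect (eadj EB') a b}.
Proof.
move=> yW connB.
have to_y a : a \in W -> connect (eadj EB') a y.
  move=> aW; have [-> | ax] := eqVneq a x; first by apply: connect1; rewrite /eadj setU11.
  exact: swap_leaf_connect ax y_neq_x (connB _ _ aW yW).
move=> a b aW bW; apply: connect_trans (to_y a aW) _.
by rewrite (sym_connect_sym (@eadj_sym _ _)) to_y.
Qed.

Lemma swap_leaf_card (P : pred {set HV V}) :
  P [set x; y] -> ~~ P [set x; w] ->
  #|[set E in EB | P E]| < #|[set E in EB' | P E]|.
Proof.
move=> Pxy Pxw.
have -> : [set E in EB' | P E] = [set x; y] |: [set E in EB | P E].
  apply/setP => E; rewrite !inE; case: eqVneq => [-> | _] /=; first exact: Pxy.
  by case: eqVneq => [-> | _]; rewrite ?(negbTE Pxw) ?andbF.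
have xy_notin : [set x; y] \notin EB.
  by apply: contraNN Pxw => /leafB /(_ (set21 x y)) <-.
by rewrite cardsU1 inE negb_and xy_notin.
Qed.
End LeafSwap.

Section Skeleton.
Variables (V : finType) (e : rel V) (F : {set V}).

Lemma Hedges_mem E a : E \in Hedges e F -> a \in E -> exists b, E = [set a; b].
Proof.
rewrite inE => /existsP[p /existsP[q /andP[/eqP-> _]]] /set2P[] <-.
  by exists q.
by exists p; rewrite setUC.
Qed.

Lemma degB_eq1_edge (EB : {set {set HV V}}) a E :
  degB EB a = 1 -> E \in EB -> a \in E ->
  forall E', E' \in EB -> a \in E' -> E' = E.
Proof.
move=> /eqP/cards1P[E0 EB_a] EB_E aE E' EB_E' aE'.
have : E \in [set E in EB | a \in E] by rewrite inE EB_E aE.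
have : E' \in [set E in EB | a \in E] by rewrite inE EB_E' aE'.
by rewrite EB_a !inE => /eqP-> /eqP->.
Qed.

Lemma two_nbrs_Hedge u T :
  u \in ~: F -> T \in trees e F -> 1 < #|[set y in T | e u y]| ->
  [set inr u; inl T] \in Hedges e F /\ is_2edge e [set inr u; inl T].
Proof.
move=> uS TF T2; split; last first.
  by apply/existsP; exists (inr u); apply/existsP; exists (inl T); rewrite eqxx.
rewrite inE; apply/existsP; exists (inr u); apply/existsP; exists (inl T).
rewrite eqxx /= uS TF /=.
have /set0Pn[y] : [set y in T | e u y] != set0 by rewrite -card_gt0 ltnW.
by rewrite inE => /andP[yT uy]; apply/exists_inP; exists y.
Qed.

Lemma skeleton_swap_leaf r (EB : {set {set HV V}}) x w y :
  skeleton e F r EB -> (forall E, E \in EB -> x \in E -> E = [set x; w]) ->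
  y != x -> [set x; y] \in Hedges e F -> y \in Hvert e F ->
  skeleton e F r ([set x; y] |: (EB :\ [set x; w])).
Proof.
case=> rT EB_H connB acyclicB leafB yx xy_H yH; split => //.
- apply/subsetP => E; rewrite in_setU1 in_setD1.
  by case/predU1P => [-> // | /andP[_ /(subsetP EB_H)]].
- exact: swap_leaf_connected.
- exact: swap_leaf_acyclic.
Qed.

End Skeleton.

Theorem corollary2 (V : finType) (e : rel V)
    (e_sym : symmetric e) (e_irr : irreflexive e)
    (G_conn : forall x y : V, connect e x y)
    (F : {set V}) (F_max : max_induced_forest e F)
    (r : HV V) (EB : {set {set HV V}})
    (B_skel : skeleton e F r EB)
    (B_max : forall (r' : HV V) (EB' : {set {set HV V}}),
        skeleton e F r' EB' -> num_2edges e EB' <= num_2edges e EB) :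
  forall u : V, u \in ~: F -> degB EB (inr u) = 1 ->
    forall E : {set HV V}, E \in EB -> inr u \in E -> is_2edge e E.
Proof.
move=> u uS deg1 E EB_E uE; apply: contraT => E_not2.
have [T TF T2] : exists2 T, T \in trees e F & 1 < #|[set y in T | e u y]|.
  by apply: max_induced_forest_two_nbrs => //; rewrite -in_setC.
have [uT_H uT_2] := two_nbrs_Hedge uS TF T2.
have [_ EB_H _ _] := B_skel.
have [w Ew] := Hedges_mem (subsetP EB_H _ EB_E) uE.
have leafB E' : E' \in EB -> inr u \in E' -> E' = [set inr u; w].
  by rewrite -Ew; apply: degB_eq1_edge.
have T_H : inl T \in Hvert e F by rewrite inE imset_f.
have B'_skel := skeleton_swap_leaf (y := inl T) B_skel leafB isT uT_H T_H.
have := B_max _ _ B'_skel; rewrite /num_2edges leqNgt.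
by rewrite (swap_leaf_card leafB uT_2) // -Ew.
Qed.
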